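(* Let $(\Omega,\mathcal F)$ be a measurable space with $\Sigma\neq\emptyset$, and let $v:\mathcal F\to\mathbb R$ be a non-decreasing, continuous, submodular set function with $v(\emptyset)=0$. Then for every bounded measurable $f:\Omega\to\mathbb R$, $$v(f)=\sup_{\mathcal I\in\Sigma}\int_\Omega f(\omega)\,\mu_{v,\mathcal I}(d\omega).$$
   Context: $\Sigma$ denotes the set of all classes $\mathcal I\subset\mathcal F$ that are chains (totally ordered by inclusion), contain $\emptyset$ and $\Omega$, and generate $\mathcal F$ as a $\sigma$-algebra. $v$ is non-decreasing if $v(A)\le v(B)$ for $A\subset B$; submodular if $v(A)+v(B)\ge v(A\cup B)+v(A\cap B)$. For $\mathcal I\in\Sigma$ let $\mathcal J$ be the algebra generated by $\mathcal I$, whose elements are the sets $\bigcup_{i=1}^n (C_i\cap D_i^c)$ with $C_1\supset D_1\supset\cdots\supset C_n\supset D_n$ in $\mathcal I$; define $\mu_{v,\mathcal I}(\bigcup_{i=1}^n (C_i\cap D_i^c))=\sum_{i=1}^n(v(C_i)-v(D_i))$. $v$ is continuous if for every $\mathcal I\in\Sigma$ this $\mu_{v,\mathcal I}$ is $\sigma$-additive on $\mathcal J$; it then extends uniquely to a measure $\mu_{v,\mathcal I}$ on $\mathcal F$. The Choquet integral is $v(f)=\lim_{y\to-\infty}\big(y\,v(\Omega)+\int_y^\infty v(\{\omega: f(\omega)>z\})\,dz\big)$. *)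

From HB Require Import structures.
From mathcomp Require Import all_boot all_order all_algebra.
From mathcomp Require Import all_classical all_reals all_analysis.
Set Implicit Arguments. Unset Strict Implicit. Unset Printing Implicit Defensive.
Import Order.TTheory GRing.Theory Num.Theory.
Import numFieldNormedType.Exports.
Local Open Scope classical_set_scope.
Local Open Scope ring_scope.

Section defs.
Context {d : measure_display} {T : measurableType d} {R : realType}.

Definition chain_class (I : set (set T)) :=
  forall A B, I A -> I B -> A `<=` B \/ B `<=` A.

Definition Sigma_class (I : set (set T)) : Prop :=
  [/\ I `<=` measurable, chain_class I, I set0, I setT & <<s I >> = measurable].

Definition sf_nondecreasing (v : set T -> R) :=
  forall A B, measurable A -> measurable B -> A `<=` B -> v A <= v B.

Definition sf_submodular (v : set T -> R) :=
  forall A B, measurable A -> measurable B ->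
    v (A `|` B) + v (A `&` B) <= v A + v B.

Definition J_rep (I : set (set T)) (n : nat) (C D : nat -> set T) :=
  [/\ forall i, (i < n)%N -> I (C i) /\ I (D i),
      forall i, (i < n)%N -> D i `<=` C i &
      forall i, (i.+1 < n)%N -> C i.+1 `<=` D i].

(* the algebra J generated by I *)
Definition J_alg (I : set (set T)) (A : set T) :=
  exists n C D, J_rep I n C D /\
    A = \bigcup_(i in [set i | (i < n)%N]) (C i `\` D i).

(* graph of mu_{v,I} on J: mu_{v,I}(U_i (C_i \ D_i)) = sum_i (v C_i - v D_i) *)
Definition muJ (v : set T -> R) (I : set (set T)) (A : set T) (x : R) :=
  exists n C D, [/\ J_rep I n C D,
    A = \bigcup_(i in [set i | (i < n)%N]) (C i `\` D i) &
    x = \sum_(0 <= i < n) (v (C i) - v (D i))].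

Definition muJ_sigma_additive (v : set T -> R) (I : set (set T)) :=
  forall (A : nat -> set T) (a : nat -> R) (B : set T) (b : R),
    (forall k, muJ v I (A k) (a k)) -> trivIset setT A ->
    muJ v I B b -> \bigcup_k A k = B ->
    (fun n => \sum_(0 <= k < n) a k) @ \oo --> b.

Definition sf_continuous (v : set T -> R) :=
  forall I, Sigma_class I -> muJ_sigma_additive v I.

Definition extends_muJ (v : set T -> R) (I : set (set T))
    (mu : {measure set T -> \bar R}) :=
  forall A x, muJ v I A x -> mu A = x%:E.

Definition choquet (v : set T -> R) (f : T -> R) : \bar R :=
  lim ((fun y : R => ((y * v setT)%:E +
     \int[@lebesgue_measure R]_(z in [set z : R | (y <= z)%R]) (v [set w | (z < f w)%R])%:E)%E)
     @ -oo).

End defs.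

(* For a chain I in Sigma, the differences C \ D with D ⊆ C in I form a semiring of sets on
   which C \ D ↦ v(C) - v(D) is a well-defined premeasure, σ-additive by continuity of v; its
   Carathéodory extension is the unique measure μ_{v,I} extending it.  Adjoining a measurable
   set A to the chain (through the sets A ∩ C and A ∪ C) and using submodularity shows
   μ_{v,I}(A) ≤ v(A).  For a < f < b and the grid a + jh, both ∫ f dμ and the Choquet integral
   v(f) are, up to h v(Ω), sums of h μ, resp. h v, over the nested superlevel sets
   {f > a + jh}.  Hence ∫ f dμ ≤ v(f) for every I, while a chain containing those finitely
   many superlevel sets, on which μ = v, gives v(f) ≤ ∫ f dμ + h v(Ω). *)

From HB Require Import structures.
From mathcomp Require Import all_boot all_order all_algebra.
From mathcomp Require Import all_classical all_reals all_analysis.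
From mathcomp Require Import lra measurable_realfun.
Import Order.TTheory GRing.Theory Num.Theory.
Import numFieldNormedType.Exports.
Local Open Scope classical_set_scope.
Local Open Scope ring_scope.

Set Implicit Arguments. Unset Strict Implicit. Unset Printing Implicit Defensive.

Section Sigma_class_facts.
Context {d : measure_display} {T : measurableType d} (I : set (set T)).
Hypothesis SI : Sigma_class I.

Lemma Sigma_measurable : I `<=` measurable. Proof. by case: SI. Qed.
Lemma Sigma_chain : chain_class I. Proof. by case: SI. Qed.
Lemma Sigma_set0 : I set0. Proof. by case: SI. Qed.
Lemma Sigma_setT : I setT. Proof. by case: SI. Qed.

End Sigma_class_facts.

Section chain_differences.
Context {d : measure_display} {T : measurableType d} (I : set (set T)).
Hypothesis chI : chain_class I.

Lemma chain_setI C D : I C -> I D -> I (C `&` D).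
Proof. by move=> IC ID; case: (chI IC ID) => h; rewrite ?(setIidl h) ?(setIidr h). Qed.

Lemma chain_setU C D : I C -> I D -> I (C `|` D).
Proof. by move=> IC ID; case: (chI IC ID) => h; rewrite ?(setUidr h) ?(setUidl h). Qed.

Definition chain_diff : set (set T) :=
  [set X | exists C D, [/\ I C, I D, D `<=` C & X = C `\` D]].

Hypothesis I0 : I set0.

Lemma chain_diff_setD C D : I C -> I D -> chain_diff (C `\` D).
Proof.
move=> IC ID; case: (chI IC ID) => CD; last by exists C, D.
by exists set0, set0; split=> //; rewrite setD0 setD_eq0.
Qed.

Lemma chain_diff0 : chain_diff set0.
Proof. by rewrite -(setD0 set0); exact: chain_diff_setD. Qed.

Lemma chain_diff_setI_closed : setI_closed chain_diff.
Proof.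
move=> _ _ [C [D [IC ID _ ->]]] [C' [D' [IC' ID' _ ->]]].
have -> : (C `\` D) `&` (C' `\` D') = (C `&` C') `\` (D `|` D').
  apply/seteqP; split=> x; first by move=> [[? ?] [? ?]]; split=> // -[].
  by move=> [[? ?] nDD']; split; split=> // ?; apply: nDD'; [left|right].
by apply: chain_diff_setD; [exact: chain_setI | exact: chain_setU].
Qed.

Lemma chain_diff_semi_setD_closed : semi_setD_closed chain_diff.
Proof.
move=> _ _ [C [D [IC ID _ ->]]] [C' [D' [IC' ID' D'C' ->]]].
set X1 := C `\` (D `|` C'); set X2 := (C `&` D') `\` D.
exists [set X1; X2]; split.
- by rewrite finite_setU; split; exact: finite_set1.
- move=> X [] ->; apply: chain_diff_setD => //; [exact: chain_setU | exact: chain_setI].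
- apply/seteqP; split=> x.
  + move=> [[Cx nDx] nC'D'x]; have [C'x|nC'x] := pselect (C' x).
    * have D'x : D' x by apply: contra_notP nC'D'x.
      by exists X2; [right | split].
    * by exists X1; [left | split=> // -[]].
  + move=> [X [] -> ].
    * by move=> [Cx nDC'x]; split; [split=> // Dx; apply: nDC'x; left
                                   | move=> [C'x _]; apply: nDC'x; right].
    * by move=> [[Cx D'x] nDx]; split=> // -[_].
- move=> X Y [] -> [] -> // [x].
  + by move=> [[_ nDC'x] [[_ D'x] _]]; exfalso; apply: nDC'x; right; exact: D'C'.
  + by move=> [[[_ D'x] _] [_ nDC'x]]; exfalso; apply: nDC'x; right; exact: D'C'.
Qed.

Lemma chain_diff_eq C D C' D' : I C -> I D -> I C' -> I D' -> D `<=` C -> D' `<=` C' ->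
  C `\` D = C' `\` D' -> C `\` D !=set0 -> C = C' /\ D = D'.
Proof.
wlog CC' : C D C' D' / C `<=` C'.
  move=> W IC ID IC' ID' DC D'C' E [x Xx].
  case: (chI IC IC') => h; first by apply: W => //; exists x.
  have X'x : (C' `\` D') x by rewrite -E.
  by have [-> ->] := W C' D' C D h IC' ID' IC ID D'C' DC (esym E) (ex_intro _ x X'x).
move=> IC ID IC' ID' DC D'C' E [x [Cx nDx]].
have eC : C = C'.
  apply/seteqP; split=> // y C'y; apply: contrapT => nCy.
  have D'y : D' y.
    by apply: contrapT => nD'y; have [] : (C `\` D) y by rewrite E.
  case: (chI ID' IC) => h; first exact/nCy/h.
  have [_ nD'x] : (C' `\` D') x by rewrite -E.
  exact/nD'x/h.
by split=> //; rewrite -(setIidr DC) -setDD E -eC setDD eC (setIidr D'C').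
Qed.

Section chain_length.
Context {R : realType} (v : set T -> R).

(* Well defined on [chain_diff] by [chain_diff_eq], and [0] elsewhere. *)
Definition chain_length (X : set T) : R :=
  if pselect (exists CD : set T * set T, [/\ I CD.1, I CD.2, CD.2 `<=` CD.1 & X = CD.1 `\` CD.2])
  is left h then let CD := projT1 (cid h) in v CD.1 - v CD.2 else 0.

Lemma chain_lengthE C D : I C -> I D -> D `<=` C -> chain_length (C `\` D) = v C - v D.
Proof.
move=> IC ID DC; rewrite /chain_length; case: pselect => [h|]; last first.
  by move=> []; exists (C, D).
case: (cid h) => -[C' D'] /= [IC' ID' D'C' E].
have [X0|/set0P X0] := eqVneq (C `\` D) set0.
  have eCD : C = D by apply/seteqP; split=> //; rewrite -setD_eq0.
  have eC'D' : C' = D' by apply/seteqP; split=> //; rewrite -setD_eq0 -E.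
  by rewrite eCD eC'D' !subrr.
have X0' : C' `\` D' !=set0 by rewrite -E.
by have [-> ->] := chain_diff_eq IC' ID' IC ID D'C' DC (esym E) X0'.
Qed.

Lemma muJ_diff C D : I C -> I D -> D `<=` C -> muJ v I (C `\` D) (v C - v D).
Proof.
move=> IC ID DC; exists 1%N, (fun=> C), (fun=> D); split.
- by split=> // i _; split.
- by apply/seteqP; split=> x; [exists 0%N | case].
- by rewrite big_nat1.
Qed.

Lemma chain_length_muJ X : chain_diff X -> muJ v I X (chain_length X).
Proof. by move=> [C [D [IC ID DC ->]]]; rewrite chain_lengthE //; exact: muJ_diff. Qed.

End chain_length.
End chain_differences.

Lemma Sigma_chain_diff_generates {d : measure_display} {T : measurableType d} (I : set (set T)) :
  Sigma_class I -> @measurable _ T = <<s chain_diff I >>.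
Proof.
move=> [Im _ I0 _ gen]; apply/seteqP; split.
- rewrite -gen; apply: sub_sigma_algebra2 => C IC.
  by exists C, set0; split=> //; rewrite setD0.
- apply: smallest_sub; first exact: sigma_algebra_measurable.
  by move=> _ [C [D [IC ID _ ->]]]; apply: measurableD; exact: Im.
Qed.

(* [chain_type] and [chain_premeasure] take the hypotheses their measure-theoretic
   instances need as (otherwise unused) arguments, so that the instances can be inferred. *)
Definition chain_type {d : measure_display} {T : measurableType d} (I : set (set T))
  of Sigma_class I : Type := T.

Section chain_type_semiring.
Context {d : measure_display} {T : measurableType d} (I : set (set T)) (SI : Sigma_class I).

HB.instance Definition _ := Pointed.on (chain_type SI).
HB.instance Definition _ := @isSemiRingOfSets.Build d (chain_type SI) (chain_diff I)
  (chain_diff0 (Sigma_chain SI) (Sigma_set0 SI))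
  (chain_diff_setI_closed (Sigma_chain SI) (Sigma_set0 SI))
  (chain_diff_semi_setD_closed (Sigma_chain SI) (Sigma_set0 SI)).

End chain_type_semiring.

Section chain_measure.
Context {d : measure_display} {T : measurableType d} {R : realType}.
Variables (v : set T -> R) (I : set (set T)) (SI : Sigma_class I).

Definition chain_premeasure of sf_nondecreasing v & sf_continuous v :
  set (chain_type SI) -> \bar R := fun X => (chain_length I v X)%:E.

Hypotheses (nd : sf_nondecreasing v) (cont : sf_continuous v).

Let chI := Sigma_chain SI.
Let I0 := Sigma_set0 SI.
Let Im := Sigma_measurable SI.

Lemma chain_length_ge0 X : 0 <= chain_length I v X.
Proof.
rewrite /chain_length; case: pselect => // h; case: (cid h) => -[C D] [IC ID DC _] /=.
by rewrite subr_ge0; apply: nd => //; exact: Im.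
Qed.

Let chain_premeasure0 : chain_premeasure nd cont set0 = 0%E.
Proof. by rewrite /chain_premeasure -(setD0 set0) chain_lengthE ?subrr. Qed.

Let chain_premeasure_ge0 X : (0 <= chain_premeasure nd cont X)%E.
Proof. by rewrite lee_fin chain_length_ge0. Qed.

Let chain_premeasure_semi_sigma_additive : semi_sigma_additive (chain_premeasure nd cont).
Proof.
move=> F mF tF mU; rewrite /chain_premeasure.
have := cont SI (fun k => chain_length_muJ chI v (mF k)) tF (chain_length_muJ chI v mU) erefl.
by move=> lim; under eq_fun do rewrite sumEFin; apply: cvg_EFin => //; exact: nearW.
Qed.

HB.instance Definition _ := isMeasure.Build _ (chain_type SI) R (chain_premeasure nd cont)
  chain_premeasure0 chain_premeasure_ge0 chain_premeasure_semi_sigma_additive.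

Definition chain_measure : set T -> \bar R := mu_ext (chain_premeasure nd cont).

Let chain_measure0 : chain_measure set0 = 0%E.
Proof. exact: mu_ext0. Qed.

Let chain_measure_ge0 X : (0 <= chain_measure X)%E.
Proof. exact: mu_ext_ge0. Qed.

Let chain_measure_semi_sigma_additive : semi_sigma_additive chain_measure.
Proof.
move=> F mF tF mU.
have gen X : measurable X -> <<s chain_diff I >> X.
  by rewrite (Sigma_chain_diff_generates SI).
exact: (@measure_semi_sigma_additive _ _ _ (measure_extension (chain_premeasure nd cont))
  F (fun i => gen _ (mF i)) tF (gen _ mU)).
Qed.

HB.instance Definition _ := isMeasure.Build _ T R chain_measure
  chain_measure0 chain_measure_ge0 chain_measure_semi_sigma_additive.

Lemma chain_measure_diff C D : I C -> I D -> D `<=` C ->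
  chain_measure (C `\` D) = (v C - v D)%:E.
Proof.
move=> IC ID DC; rewrite /chain_measure measurable_mu_extE; last by exists C, D.
by rewrite /= /chain_premeasure chain_lengthE.
Qed.

Lemma chain_measure_mem C : v set0 = 0 -> I C -> chain_measure C = (v C)%:E.
Proof. by move=> v0 IC; rewrite -{1}(setD0 C) chain_measure_diff // v0 subr0. Qed.

Lemma J_rep_sub n C D i j : J_rep I n C D -> (i < j)%N -> (j < n)%N -> C j `<=` D i.
Proof.
move=> [_ DC CD]; elim: j => // j IH ij jn.
rewrite ltnS leq_eqVlt in ij; case/orP: ij => [/eqP -> | ij]; first exact: CD.
exact: subset_trans (CD j jn) (subset_trans (DC j (ltnW jn)) (IH ij (ltnW jn))).
Qed.

Lemma chain_measure_extends : extends_muJ v I chain_measure.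
Proof.
move=> _ _ [n [C [D [r -> ->]]]]; have [ICD DC _] := r.
pose F i := if (i < n)%N then C i `\` D i else set0.
have mF i : measurable (F i).
  rewrite /F; case: ifPn => // ilt.
  by have [IC ID] := ICD i ilt; apply: measurableD; exact: Im.
have tF : trivIset setT F.
  suff disj i j : (i < j)%N -> F i `&` F j = set0.
    move=> i j _ _ /set0P; apply: contraTeq; rewrite negbK.
    have [ij|ji|->] := ltngtP i j; last by move=> /eqP.
    - by rewrite disj ?eqxx.
    - by rewrite setIC disj ?eqxx.
  move=> ij; rewrite /F; case: ifPn => [_|_]; last exact: set0I.
  case: ifPn => [jlt|_]; last exact: setI0.
  by apply/seteqP; split=> // x [[_ nDx] [Cx _]]; exact/nDx/(J_rep_sub r ij jlt).
have -> : \bigcup_(i in [set i | (i < n)%N]) (C i `\` D i) = \big[setU/set0]_(i < n) F i.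
  by rewrite -bigcup_mkord; apply: eq_bigcupr => i /= ilt; rewrite /F ilt.
rewrite measure_semi_additive //; last exact: bigsetU_measurable.
rewrite -sumEFin big_mkord; apply: eq_bigr => i _; rewrite /F ltn_ord.
by have [IC ID] := ICD i (ltn_ord i); rewrite /= chain_measure_diff //; exact: DC.
Qed.

Lemma extension_chain_measure (mu : {measure set T -> \bar R}) :
  extends_muJ v I mu -> forall X, measurable X -> mu X = chain_measure X.
Proof.
move=> ext X mX; apply: (measure_unique (chain_diff I) (fun=> setT)) => //.
- exact: Sigma_chain_diff_generates.
- exact: chain_diff_setI_closed.
- by move=> _; rewrite -(setD0 setT); exact: chain_diff_setD (Sigma_setT SI) I0.
- by rewrite bigcup_const.
- move=> _ [C [D [IC ID DC ->]]].
  by rewrite /= chain_measure_diff // (ext _ _ (muJ_diff v IC ID DC)).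
- move=> _; rewrite -(setD0 setT).
  by rewrite (ext _ _ (muJ_diff v (Sigma_setT SI) I0 (@sub0set _ _))) ltry.
Qed.

Lemma chain_measure_fin X : measurable X -> chain_measure X \is a fin_num.
Proof.
move=> mX; rewrite ge0_fin_numE ?measure_ge0 //.
apply: (@le_lt_trans _ _ (chain_measure setT)); first by apply: le_measure; rewrite ?inE.
by rewrite -(setD0 setT) chain_measure_diff ?ltry //; exact: Sigma_setT.
Qed.

End chain_measure.

Lemma submodular_diff_le {d : measure_display} {T : measurableType d} {R : realType}
    (v : set T -> R) (A C D : set T) :
  sf_nondecreasing v -> sf_submodular v -> measurable A -> measurable C -> measurable D ->
  D `<=` C -> v (A `|` C) - v (A `|` D) <= v C - v D.
Proof.
move=> nd sm mA mC mD DC.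
have := sm C (A `|` D) mC (measurableU _ _ mA mD).
have -> : C `|` (A `|` D) = A `|` C by rewrite setUCA (setUidl DC) setUC.
have : v D <= v (C `&` (A `|` D)).
  apply: nd => //; first by apply: measurableI => //; exact: measurableU.
  by move=> x Dx; split; [exact: DC | right].
lra.
Qed.

Section chain_adjoin.
Context {d : measure_display} {T : measurableType d}.
Implicit Types (I : set (set T)) (A : set T).

Definition chain_adjoin I A : set (set T) :=
  [set X | exists2 C, I C & X = A `&` C \/ X = A `|` C].

Lemma chain_adjoin_self I A : I setT -> chain_adjoin I A A.
Proof. by move=> IT; exists setT => //; left; rewrite setIT. Qed.

Lemma chain_adjoin_comparable I A U : I U -> U `<=` A \/ A `<=` U -> chain_adjoin I A U.
Proof.
by move=> IU [UA|AU]; exists U => //; [left; rewrite setIidr | right; rewrite setUidr].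
Qed.

Lemma Sigma_chain_adjoin I A : Sigma_class I -> measurable A -> Sigma_class (chain_adjoin I A).
Proof.
move=> [Im chI I0 IT gen] mA.
have adj_meas : chain_adjoin I A `<=` measurable.
  by move=> _ [C IC [->|->]]; [apply: measurableI | apply: measurableU] => //; exact: Im.
split=> //.
- move=> _ _ [C IC [->|->]] [C' IC' [->|->]].
  + by case: (chI _ _ IC IC') => h; [left | right]; apply: setIS.
  + by left=> x [Ax _]; left.
  + by right=> x [Ax _]; left.
  + by case: (chI _ _ IC IC') => h; [left | right]; apply: setUS.
- by exists set0 => //; left; rewrite setI0.
- by exists setT => //; right; rewrite setUT.
- apply/seteqP; split; first exact: smallest_sub (sigma_algebra_measurable _) adj_meas.
  rewrite -gen; apply: smallest_sub => // C IC.
  have -> : C = (A `&` C) `|` ((A `|` C) `\` A).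
    apply/seteqP; split=> [x Cx|x [[]|[[]]]] //.
    by have [Ax|nAx] := pselect (A x); [left | right; split=> //; right].
  have gen_adj X : chain_adjoin I A X -> <<s chain_adjoin I A >> X.
    exact: sub_sigma_algebra.
  apply: (@measurableU _ (g_sigma_algebraType (chain_adjoin I A))).
    by apply: gen_adj; exists C => //; left.
  apply: (@measurableD _ (g_sigma_algebraType (chain_adjoin I A))).
    by apply: gen_adj; exists C => //; right.
  exact: gen_adj (chain_adjoin_self A IT).
Qed.

Lemma Sigma_class_extend I (U : nat -> set T) n :
  Sigma_class I -> (forall j, measurable (U j)) -> (forall i j, (i <= j)%N -> U j `<=` U i) ->
  exists2 J, Sigma_class J & forall j, (j < n)%N -> J (U j).
Proof.
move=> SI mU Udec; elim: n => [|n [J SJ JU]]; first by exists I.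
exists (chain_adjoin J (U n)); first exact: Sigma_chain_adjoin.
move=> j; rewrite ltnS leq_eqVlt => /orP[/eqP -> | jn].
- by apply: chain_adjoin_self; exact: Sigma_setT SJ.
- by apply: chain_adjoin_comparable; [exact: JU | right; exact: Udec (ltnW jn)].
Qed.

End chain_adjoin.

Section chain_measure_submodular.
Context {d : measure_display} {T : measurableType d} {R : realType}.
Variables (v : set T -> R) (I : set (set T)) (SI : Sigma_class I).
Hypotheses (nd : sf_nondecreasing v) (cont : sf_continuous v) (sm : sf_submodular v).

Local Notation mu := (chain_measure SI nd cont).

Lemma chain_measure_setC_ge A : measurable A -> ((v setT - v A)%:E <= mu (~` A))%E.
Proof.
move=> mA; pose nu := chain_measure (Sigma_chain_adjoin SI mA) nd cont.
have IT := Sigma_setT SI; have Im := Sigma_measurable SI; have chI := Sigma_chain SI.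
have <- : nu (~` A) = (v setT - v A)%:E.
  rewrite /nu -setTD chain_measure_diff //; last exact: chain_adjoin_self.
  by exists setT => //; right; rewrite setUT.
(* nu lies below every cover sum defining the outer measure mu, since on each piece
   nu (~` A `&` (C `\` D)) = v (A `|` C) - v (A `|` D) <= v C - v D. *)
rewrite [X in (_ <= X)%E]/chain_measure; apply: le_ereal_inf_tmp => _ [F [mF cov] <-].
apply: (@le_trans _ _ (\sum_(k <oo) nu (~` A `&` F k))%E).
  apply: measure_sigma_subadditive.
  - move=> k; have [C [D [IC ID _ ->]]] := mF k.
    by apply: measurableI; [exact: measurableC | apply: measurableD; exact: Im].
  - exact: measurableC.
  - by move=> x Ax; have [k _ Fkx] := cov x Ax; exists k.
apply: lee_nneseries => [k _ _|k _]; first exact: measure_ge0.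
have [C [D [IC ID DC ->]]] := mF k.
have -> : ~` A `&` (C `\` D) = (A `|` C) `\` (A `|` D).
  apply/seteqP; split=> x; first by move=> [nAx [Cx nDx]]; split; [right | case].
  move=> [[Ax|Cx] nADx]; first by exfalso; apply: nADx; left.
  by split; [move=> Ax; apply: nADx; left | split=> // Dx; apply: nADx; right].
rewrite /nu chain_measure_diff; first last.
- exact: setUS.
- by exists D => //; right.
- by exists C => //; right.
rewrite /= /chain_premeasure chain_lengthE // lee_fin.
by apply: submodular_diff_le => //; exact: Im.
Qed.

Lemma chain_measure_le A : v set0 = 0 -> measurable A -> (mu A <= (v A)%:E)%E.
Proof.
move=> v0 mA; have := chain_measure_setC_ge mA.
have finA := chain_measure_fin SI nd cont mA.
have finAc := chain_measure_fin SI nd cont (measurableC mA).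
have : (mu A + mu (~` A))%E = (v setT)%:E.
  rewrite -(measureU mu mA (measurableC mA) (setICr A)) /= setUv.
  by rewrite chain_measure_mem //; exact: Sigma_setT.
rewrite -(fineK finA) -(fineK finAc) -EFinD !lee_fin => -[]; lra.
Qed.

End chain_measure_submodular.

Lemma grid_succ {R : numDomainType} (a h : R) (k : nat) :
  a + k.+1%:R * h = a + h + k%:R * h.
Proof. by rewrite -natr1 mulrDl mul1r addrA addrAC. Qed.

Section tail_integral.
Context {R : realType} (g : R -> R).

Local Notation leb := (@lebesgue_measure R).

Definition tail_integral (y : R) : \bar R :=
  (\int[leb]_(z in [set z : R | (y <= z)%R]) (g z)%:E)%E.

Hypotheses (g_nonincr : forall x y : R, x <= y -> g y <= g x) (g_ge0 : forall z, 0 <= g z).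

Let measurable_ge (y : R) : measurable [set z : R | y <= z].
Proof. by rewrite -set_itvcy; exact: measurable_itv. Qed.

Let measurable_g (D : set R) : measurable D -> measurable_fun D (EFin \o g).
Proof. by move=> mD; apply/measurable_EFinP; exact: nonincreasing_measurable. Qed.

Lemma tail_integral_split (y c : R) : y <= c ->
  tail_integral y = (\int[leb]_(z in `[y, c[) (g z)%:E + tail_integral c)%E.
Proof.
move=> yc; rewrite /tail_integral.
have -> : [set z : R | y <= z] = `[y, c[%classic `|` [set z | c <= z].
  apply/seteqP; split=> z /=.
  - by move=> yz; have [zc|cz] := ltP z c; [left; rewrite /= in_itv /= yz zc | right].
  - by move=> [|]; [rewrite /= in_itv /= => /andP[] | exact: le_trans].
rewrite ge0_integral_setU //.
- exact: measurable_ge.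
- by apply: measurable_g; apply: measurableU; [exact: measurable_itv | exact: measurable_ge].
- by move=> z _; rewrite lee_fin.
- apply/disj_setPS => z [] /=; rewrite in_itv /= => /andP[_ zc] cz.
  by move: (lt_le_trans zc cz); rewrite ltxx.
Qed.

Lemma integral_itv_bounds (a h : R) : 0 < h ->
  ((h * g (a + h))%:E <= \int[leb]_(z in `[a, (a + h)%R[) (g z)%:E)%E /\
  (\int[leb]_(z in `[a, (a + h)%R[) (g z)%:E <= (h * g a)%:E)%E.
Proof.
move=> h0; have mI : measurable `[a, (a + h)%R[%classic by exact: measurable_itv.
have lebI : leb `[a, (a + h)%R[%classic = h%:E.
  by rewrite lebesgue_measure_itv /= lte_fin ltrDl h0 -EFinD addrAC subrr add0r.
have integral_const c : (\int[leb]_(z in `[a, (a + h)%R[) (cst c%:E z) = (h * c)%:E)%E.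
  by rewrite integral_cst //= lebI -EFinM mulrC.
split; rewrite -integral_const; apply: ge0_le_integral => //;
  try (by move=> *; rewrite lee_fin); try exact: measurable_cst; try (by apply: measurable_g).
- by move=> z; rewrite /= in_itv /= lee_fin => /andP[_ /ltW]; exact: g_nonincr.
- by move=> z; rewrite /= in_itv /= lee_fin => /andP[+ _]; exact: g_nonincr.
Qed.

Lemma tail_integral_riemann (h : R) (N : nat) (a : R) : 0 < h ->
  (forall z, a + N%:R * h <= z -> g z = 0) ->
  ((\sum_(j < N) h * g (a + j.+1%:R * h))%:E <= tail_integral a)%E /\
  (tail_integral a <= (\sum_(j < N) h * g (a + j%:R * h))%:E)%E.
Proof.
move=> h0; elim: N a => [|N IH] a g0.
  have -> : tail_integral a = 0%E.
    by apply: integral0_eq => z /= az; rewrite g0 // mulr0n mul0r addr0.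
  by rewrite !big_ord0.
have g0' z : a + h + N%:R * h <= z -> g z = 0.
  by rewrite -grid_succ; exact: g0.
have [IH1 IH2] := IH (a + h) g0'.
have [P1 P2] := integral_itv_bounds a h0.
rewrite (@tail_integral_split a (a + h)); last by rewrite lerDl ltW.
rewrite !big_ord_recl /= mul0r addr0 mul1r !EFinD.
have E1 : \sum_(i < N) h * g (a + (bump 0 i).+1%:R * h) =
          \sum_(j < N) h * g (a + h + j.+1%:R * h).
  by apply: eq_bigr => i _; rewrite /bump /= add1n grid_succ.
have E2 : \sum_(i < N) h * g (a + (bump 0 i)%:R * h) =
          \sum_(j < N) h * g (a + h + j%:R * h).
  by apply: eq_bigr => i _; rewrite /bump /= add1n grid_succ.
by rewrite E1 E2; split; apply: leeD.
Qed.

Lemma tail_integral_flat (y a V : R) : y <= a -> (forall z, z < a -> g z = V) ->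
  tail_integral y = (((a - y) * V)%:E + tail_integral a)%E.
Proof.
move=> ya gV; rewrite (tail_integral_split ya); congr (_ + _)%E.
have -> : (\int[leb]_(z in `[y, a[) (g z)%:E = \int[leb]_(z in `[y, a[) (cst V%:E z))%E.
  by apply: eq_integral => z; rewrite inE /= in_itv /= => /andP[_ za]; rewrite gV.
rewrite integral_cst /= ?lebesgue_measure_itv /=; last exact: measurable_itv.
have [ya'|ay] := ltP y a; first by rewrite lte_fin ya' -EFinD -EFinM mulrC.
have -> : a = y by apply/eqP; rewrite eq_le ay ya.
by rewrite ltxx subrr mul0r mule0.
Qed.

End tail_integral.

Lemma choquet_tail {d : measure_display} {T : measurableType d} {R : realType}
    (v : set T -> R) (f : T -> R) (a : R) :
  (forall x y : R, x <= y -> v [set w | y < f w] <= v [set w | x < f w]) ->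
  (forall z : R, 0 <= v [set w | z < f w]) ->
  (forall z : R, z < a -> v [set w | z < f w] = v setT) ->
  choquet v f = ((a * v setT)%:E + tail_integral (fun z => v [set w | (z < f w)%R]) a)%E.
Proof.
move=> g_nonincr g_ge0 g_top; apply: cvg_lim => //; apply: cvg_near_cst.
near=> y; have ya : y <= a by near: y; apply: nbhs_ninfty_le; exact: num_real.
have := tail_integral_flat g_nonincr g_ge0 ya g_top; rewrite /tail_integral => ->.
rewrite addeA -EFinD; congr (_%:E + _)%E.
by rewrite mulrBl addrC subrK.
Unshelve. all: by end_near.
Qed.

Lemma measurable_superlevel {d : measure_display} {T : measurableType d} {R : realType}
    (f : T -> R) (t : R) :
  measurable_fun setT f -> measurable [set w | t < f w].
Proof.
move=> mf; have -> : [set w | t < f w] = f @^-1` `]t, +oo[.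
  by apply/seteqP; split=> w /=; rewrite in_itv /= andbT.
by rewrite -[X in measurable X]setTI; apply: mf => //; exact: measurable_itv.
Qed.

Section grid_count.
Context {R : realType} (h x : R).
Hypothesis h_gt0 : 0 < h.

Definition grid_count (a : R) (N : nat) : R :=
  \sum_(j < N) (if a + j.+1%:R * h < x then 1 else 0).

Lemma grid_count_ge0 a N : 0 <= grid_count a N.
Proof. by apply: sumr_ge0 => j _; case: ifP. Qed.

Lemma grid_count0 a N : x <= a -> grid_count a N = 0.
Proof.
move=> xa; apply: big1 => j _; case: ifP => // hx.
have : a < a + j.+1%:R * h by rewrite ltrDl mulr_gt0 // ltr0n.
lra.
Qed.

Lemma grid_countS a N : grid_count a N.+1 = (if a + h < x then 1 else 0) + grid_count (a + h) N.
Proof.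
rewrite /grid_count big_ord_recl /= mul1r; congr (_ + _); apply: eq_bigr => j _.
by rewrite /bump /= add1n grid_succ.
Qed.

Lemma grid_count_lower N a : a <= x -> a + h * grid_count a N <= x.
Proof.
elim: N a => [|N IH] a ax; first by rewrite /grid_count big_ord0 mulr0 addr0.
rewrite grid_countS; have [ahx|xah] := ltP (a + h) x.
- by have := IH (a + h) (ltW ahx); lra.
- by rewrite (grid_count0 N xah); lra.
Qed.

Lemma grid_count_upper N a : x <= a + N.+1%:R * h -> x <= a + h + h * grid_count a N.
Proof.
elim: N a => [|N IH] a xa; first by rewrite /grid_count big_ord0 mulr0 addr0 -(mul1r h).
rewrite grid_countS; have [ahx|xah] := ltP (a + h) x.
- by move: xa; rewrite grid_succ => /IH; lra.
- have := mulr_ge0 (ltW h_gt0) (grid_count_ge0 (a + h) N); lra.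
Qed.

End grid_count.

Definition grid_level {d : measure_display} {T : measurableType d} {R : realType}
  (f : T -> R) (a h : R) (j : nat) : set T := [set w | a + j.+1%:R * h < f w].

Section grid_integral.
Context {d : measure_display} {T : measurableType d} {R : realType}.
Variables (mu : {measure set T -> \bar R}) (V : R) (f : T -> R) (a h : R).
Hypotheses (muT : mu setT = V%:E) (mf : measurable_fun setT f).

Let measurable_level j : measurable (grid_level f a h j).
Proof. exact: measurable_superlevel. Qed.

Let bounded_by (s : T -> R) (M : R) : (forall w, `|s w| <= M) -> [bounded s w | w in setT].
Proof.
move=> sM; exists M; split; first by rewrite num_real.
by move=> y My w _; apply: le_trans (sM w) _; exact: ltW.
Qed.

Let integrable_bounded (s : T -> R) (M : R) : measurable_fun setT s ->
  (forall w, `|s w| <= M) -> mu.-integrable setT (EFin \o s).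
Proof.
move=> ms sM; apply: measurable_bounded_integrable => //; last exact: bounded_by sM.
by rewrite muT ltry.
Qed.

Let indic_grid_level j w :
  (if a + j.+1%:R * h < f w then 1 else 0) = \1_(grid_level f a h j) w :> R.
Proof.
rewrite indicE; case: ifPn => H; first by rewrite mem_set.
by rewrite memNset //= => /(negP H).
Qed.

Lemma integral_grid_staircase (m : nat -> R) (c : R) :
  (forall j, mu (grid_level f a h j) = (m j)%:E) -> forall N,
  mu.-integrable setT (EFin \o (fun w => c + h * grid_count h (f w) a N)) /\
  (\int[mu]_w (c + h * grid_count h (f w) a N)%:E = (c * V + h * \sum_(j < N) m j)%:E)%E.
Proof.
move=> mE; elim=> [|N [IHi IHe]].
  have E w : c + h * grid_count h (f w) a 0 = c by rewrite /grid_count big_ord0 mulr0 addr0.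
  under [X in _.-integrable _ X]eq_fun do rewrite /= E.
  under eq_integral do rewrite E.
  split; first exact: (@integrable_bounded (cst c) `|c|).
  by rewrite integral_cst // muT -EFinM big_ord0 mulr0 addr0.
have indic_le1 w : `|\1_(grid_level f a h N) w| <= 1 :> R.
  by rewrite indicE; case: (_ \in _); rewrite ?normr1 ?normr0.
have m_indic : measurable_fun setT (\1_(grid_level f a h N) : T -> R).
  exact: measurable_indic.
have i_indic : mu.-integrable setT (EFin \o (fun w => h * \1_(grid_level f a h N) w)).
  apply: (@integrable_bounded _ `|h|); first exact: measurable_funM.
  by move=> w; rewrite normrM ler_piMr.
have E w : c + h * grid_count h (f w) a N.+1 =
    (c + h * grid_count h (f w) a N) + h * \1_(grid_level f a h N) w.
  by rewrite /grid_count big_ord_recr /= indic_grid_level mulrDr addrA.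
under [X in _.-integrable _ X]eq_fun do rewrite /= E.
under eq_integral do rewrite E EFinD.
split; first exact: (integrableD _ IHi i_indic).
rewrite (integralD_EFin _ IHi i_indic) // IHe.
under [X in (_ + X)%E]eq_integral do rewrite /= EFinM.
rewrite integralZl //; last exact: (@integrable_bounded _ 1).
rewrite integral_indic // setIT mE -!EFinM -EFinD.
by rewrite big_ord_recr /= mulrDr addrA.
Qed.

Lemma integral_grid_bounds (N : nat) (m : nat -> R) : 0 < h ->
  (forall w, a <= f w <= a + N.+1%:R * h) ->
  (forall j, mu (grid_level f a h j) = (m j)%:E) ->
  ((a * V + h * \sum_(j < N) m j)%:E <= \int[mu]_w (f w)%:E)%E /\
  (\int[mu]_w (f w)%:E <= ((a + h) * V + h * \sum_(j < N) m j)%:E)%E.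
Proof.
move=> h_gt0 f_grid mE.
have f_bounded w : `|f w| <= `|a| + `|a + N.+1%:R * h|.
  have /andP[af fb] := f_grid w; rewrite ler_norml.
  have := ler_norm (- a); have := ler_norm (a + N.+1%:R * h); rewrite normrN.
  have := normr_ge0 a; have := normr_ge0 (a + N.+1%:R * h); lra.
have fi := integrable_bounded mf f_bounded.
have [i1 e1] := integral_grid_staircase a mE N.
have [i2 e2] := integral_grid_staircase (a + h) mE N.
split.
- rewrite -e1; apply: le_integral => // w _; rewrite lee_fin.
  by apply: grid_count_lower => //; case/andP: (f_grid w).
- rewrite -e2; apply: le_integral => // w _; rewrite lee_fin.
  by apply: grid_count_upper => //; case/andP: (f_grid w).
Qed.

End grid_integral.

Lemma sum_le_shift {R : numDomainType} (u : nat -> R) (N : nat) :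
  0 <= u N.+1 -> \sum_(j < N.+1) u j <= u 0%N + \sum_(j < N.+1) u j.+1.
Proof. by move=> uN; rewrite big_ord_recl lerD2l big_ord_recr /= lerDl. Qed.

Lemma lee_add_vanishing {R : realType} (x y : \bar R) (c : R) : 0 <= c ->
  (forall N : nat, (x <= y + (c / N.+1%:R)%:E)%E) -> (x <= y)%E.
Proof.
move=> c0 xy; apply/lee_addgt0Pr => e e0; apply: le_trans (xy (Num.truncn (c / e))) _.
apply: leeD2l; rewrite lee_fin ler_pdivrMr ?ltr0n // mulrC -ler_pdivrMr //.
exact/ltW/truncnS_gt.
Qed.

Section bounded_integrand.
Context {d : measure_display} {T : measurableType d} {R : realType} (v : set T -> R).
Hypotheses (nd : sf_nondecreasing v) (v0 : v set0 = 0).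
Variables (f : T -> R) (a b : R).
Hypotheses (mf : measurable_fun setT f).
Hypotheses (a_lt_f : forall w, a < f w) (f_lt_b : forall w, f w < b).

Let g z := v [set w | z < f w].
Let V := v setT.
Let h (N : nat) := (b - a) / N.+1%:R.

Let measurable_level z : measurable [set w | z < f w].
Proof. exact: measurable_superlevel. Qed.

Let g_nonincr x y : x <= y -> g y <= g x.
Proof. by move=> xy; apply: nd => // w /=; exact: le_lt_trans. Qed.

Let g_ge0 z : 0 <= g z.
Proof. by rewrite -v0; apply: nd. Qed.

Let g_le_V z : g z <= V.
Proof. exact: nd. Qed.

Let a_lt_b : a < b.
Proof. exact: lt_trans (a_lt_f point) (f_lt_b point). Qed.

Let h_gt0 N : 0 < h N.
Proof. by rewrite divr_gt0 ?ltr0n // subr_gt0. Qed.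

Let grid_end N : a + N.+1%:R * h N = b.
Proof. by rewrite mulrC divfK ?pnatr_eq0 // addrC subrK. Qed.

Let f_on_grid N w : a <= f w <= a + N.+2%:R * h N.
Proof.
rewrite (ltW (a_lt_f w)) /= -[N.+2%:R]natr1 mulrDl mul1r addrA grid_end.
have := f_lt_b w; have := h_gt0 N; lra.
Qed.

Let grid_level_nonincr N i j :
  (i <= j)%N -> grid_level f a (h N) j `<=` grid_level f a (h N) i.
Proof.
move=> ij w /=; apply: le_lt_trans.
by rewrite lerD2l ler_pM2r ?h_gt0 // ler_nat ltnS.
Qed.

Let error_ge0 : 0 <= (b - a) * V.
Proof. by rewrite mulr_ge0 ?subr_ge0 ?(ltW a_lt_b) // -v0; apply: nd. Qed.

Let error N : h N * V = (b - a) * V / N.+1%:R.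
Proof. by rewrite mulrAC. Qed.

Lemma choquet_bounded : choquet v f = ((a * V)%:E + tail_integral g a)%E.
Proof.
apply: choquet_tail => // z za; congr v; apply/seteqP; split=> // w _ /=.
exact: lt_trans za (a_lt_f w).
Qed.

Let tail_riemann N :
  ((\sum_(j < N.+1) h N * g (a + j.+1%:R * h N))%:E <= tail_integral g a)%E /\
  (tail_integral g a <= (\sum_(j < N.+1) h N * g (a + j%:R * h N))%:E)%E.
Proof.
apply: tail_integral_riemann => // z; rewrite grid_end => bz.
rewrite /g -v0; congr v; apply/seteqP; split=> // w /= zw.
by have := f_lt_b w; lra.
Qed.

Let tail_fin_num : tail_integral g a \is a fin_num.
Proof.
rewrite ge0_fin_numE; last by apply: integral_ge0 => z _; rewrite lee_fin.
by have [_ up] := tail_riemann 0; apply: le_lt_trans up _; exact: ltry.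
Qed.

Lemma integral_le_choquet (I : set (set T)) (mu : {measure set T -> \bar R}) :
  sf_continuous v -> sf_submodular v -> Sigma_class I -> extends_muJ v I mu ->
  (\int[mu]_w (f w)%:E <= choquet v f)%E.
Proof.
move=> cont sm SI ext.
have muE := extension_chain_measure SI nd cont ext.
have muT : mu setT = V%:E.
  rewrite -(setD0 setT) (ext _ _ (muJ_diff v (Sigma_setT SI) (Sigma_set0 SI) (@sub0set _ _))).
  by rewrite v0 subr0.
apply: (lee_add_vanishing error_ge0) => N.
pose m j := fine (mu (grid_level f a (h N) j)).
have mE j : mu (grid_level f a (h N) j) = (m j)%:E.
  by rewrite fineK // muE; [apply: chain_measure_fin |]; exact: measurable_level.
have m_le j : m j <= g (a + j.+1%:R * h N).
  by rewrite -lee_fin -mE muE; [apply: chain_measure_le => // |]; exact: measurable_level.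
have [_ up] := integral_grid_bounds muT mf (h_gt0 N) (f_on_grid N) mE.
have [lo _] := tail_riemann N.
rewrite choquet_bounded -(fineK tail_fin_num) lee_fin in lo *.
apply: le_trans up _; rewrite -!EFinD lee_fin -error.
have : h N * \sum_(j < N.+1) m j <= \sum_(j < N.+1) h N * g (a + j.+1%:R * h N).
  by rewrite mulr_sumr; apply: ler_sum => j _; rewrite ler_pM2l.
lra.
Qed.

Lemma choquet_le_sup_integral : sf_continuous v -> (exists I : set (set T), Sigma_class I) ->
  (choquet v f <= ereal_sup [set x | exists (I : set (set T)) (mu : {measure set T -> \bar R}),
     [/\ Sigma_class I, extends_muJ v I mu & x = (\int[mu]_w (f w)%:E)%E]])%E.
Proof.
move=> cont [I0 SI0]; apply: (lee_add_vanishing error_ge0) => N.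
have [I SI Ilevel] := Sigma_class_extend N.+1 SI0
  (fun j => measurable_level _) (@grid_level_nonincr N).
pose mu := chain_measure SI nd cont.
apply: (@le_trans _ _ (\int[mu]_w (f w)%:E + ((b - a) * V / N.+1%:R)%:E)%E); last first.
  apply: leeD2r; apply: ereal_sup_ubound; exists I, mu; split=> //.
  exact: chain_measure_extends.
pose m j := fine (mu (grid_level f a (h N) j)).
have mE j : mu (grid_level f a (h N) j) = (m j)%:E.
  by rewrite fineK //; exact: chain_measure_fin (measurable_level _).
have m_level j : (j < N.+1)%N -> m j = g (a + j.+1%:R * h N).
  by move=> jN; rewrite /m /mu chain_measure_mem //; exact: Ilevel.
have muT : mu setT = V%:E by rewrite /mu chain_measure_mem //; exact: Sigma_setT.
have [lo _] := integral_grid_bounds muT mf (h_gt0 N) (f_on_grid N) mE.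
have [_ up] := tail_riemann N.
rewrite choquet_bounded -(fineK tail_fin_num) lee_fin in up *.
apply: le_trans (leeD2r _ lo); rewrite -!EFinD lee_fin -error.
have := @sum_le_shift _ (fun j => h N * g (a + j%:R * h N)) N
  (mulr_ge0 (ltW (h_gt0 N)) (g_ge0 _)).
have : \sum_(j < N.+1) h N * g (a + j.+1%:R * h N) = h N * \sum_(j < N.+1) m j.
  by rewrite mulr_sumr; apply: eq_bigr => j _; rewrite m_level.
have : h N * g (a + 0%:R * h N) <= h N * V by rewrite ler_pM2l.
lra.
Qed.

End bounded_integrand.

Theorem theorem10 (d : measure_display) (T : measurableType d) (R : realType)
    (v : set T -> R) :
  (exists I : set (set T), Sigma_class I) ->
  sf_nondecreasing v -> sf_continuous v -> sf_submodular v -> v set0 = 0 ->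
  forall f : T -> R, measurable_fun setT f -> (exists M : R, forall w, `|f w| <= M) ->
  choquet v f =
  ereal_sup [set x | exists (I : set (set T)) (mu : {measure set T -> \bar R}),
                [/\ Sigma_class I, extends_muJ v I mu & x = (\int[mu]_w (f w)%:E)%E]].
Proof.
move=> Sigma_ne nd cont sm v0 f mf [M fM].
have f_gt w : - (`|M| + 1) < f w.
  by move: (fM w); rewrite ler_norml => /andP[+ _]; have := ler_norm M; lra.
have f_lt w : f w < `|M| + 1.
  by move: (fM w); rewrite ler_norml => /andP[_ +]; have := ler_norm M; lra.
apply/eqP; rewrite eq_le (choquet_le_sup_integral nd v0 mf f_gt f_lt cont Sigma_ne) /=.
apply: ub_ereal_sup => _ [I [mu [SI ext ->]]].
exact: (integral_le_choquet nd v0 mf f_gt f_lt cont sm SI ext).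
Qed.
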